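(* The map $D\mapsto D^{\#}=(D^\dagger)^\ddagger$ is an automorphism of $\Psi\mathfrak D$ of order $4$.
   Context: $\Psi\mathfrak D$ is the algebra of all formal series $\sum_{m=-\infty}^{M}\sum_{k=-\infty}^{K}C_{km}x^k(d/dx)^m$ ($C_{km}\in\mathbb C$, $M,K$ depending on the series) with multiplication determined by $(d/dx)^m x^k=\sum_{j\ge0}\frac{(m)_j(k)_j}{j!}x^{k-j}(d/dx)^{m-j}$, $(a)_j=a(a-1)\cdots(a-j+1)$. The involutive antiautomorphisms $\dagger$ and $\ddagger$ are given by $\bigl(\sum C_{km}x^k(d/dx)^m\bigr)^\dagger=\sum C_{km}(-d/dx)^mx^k$ and $\bigl(\sum C_{km}x^k(d/dx)^m\bigr)^\ddagger=\sum C_{km}x^m(d/dx)^k$. *)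

From HB Require Import structures.
From mathcomp Require Import all_boot all_order all_algebra.
From mathcomp Require Import complex.
From mathcomp Require Import classical_sets fsbigop reals.
Set Implicit Arguments. Unset Strict Implicit. Unset Printing Implicit Defensive.
Import Order.TTheory GRing.Theory Num.Theory.
Local Open Scope ring_scope.

Definition CC (R : realType) := R[i].

(* A formal series  sum_{k,m} c k m x^k (d/dx)^m  is encoded by its
   coefficient function c : int -> int -> C  (first index: power of x,
   second index: power of d/dx). *)
Definition series (R : realType) := int -> int -> CC R.

Definition PsiD (R : realType) (c : series R) : Prop :=
  exists K M : int, forall k m : int, (K < k \/ M < m) -> c k m = 0.

Definition ffact (R : realType) (a : int) (j : nat) : CC R :=
  \prod_(i < j) (a%:~R - i%:R).

Definition sadd (R : realType) (c d : series R) : series R :=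
  fun k m => c k m + d k m.
Definition sscale (R : realType) (z : CC R) (c : series R) : series R :=
  fun k m => z * c k m.
Definition mono (R : realType) (k0 m0 : int) : series R :=
  fun k m => ((k == k0) && (m == m0))%:R.
Definition sone (R : realType) : series R := mono R 0 0.

(* Product: bilinear extension of
   (x^a d^b)(x^c d^e) = x^a (d^b x^c) d^e
     = sum_{j>=0} (b)_j (c)_j / j! x^{a+c-j} d^{b+e-j}.
   The coefficient at (k,l) collects the terms indexed by (a,b,j), with
   c = k+j-a and e = l+j-b; for elements of PsiD this is a finite sum. *)
Definition smul (R : realType) (c d : series R) : series R :=
  fun k l => \sum_(t \in [set: int * int * nat])
    (c t.1.1 t.1.2 * d (k + t.2%:Z - t.1.1) (l + t.2%:Z - t.1.2)
       * ffact R t.1.2 t.2 * ffact R (k + t.2%:Z - t.1.1) t.2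
       / (t.2`!)%:R).

(* dagger: sum C_{km} x^k d^m  |->  sum C_{km} (-d)^m x^k,
   where (-d)^m x^k = (-1)^m d^m x^k is computed with the product above. *)
Definition dagger (R : realType) (c : series R) : series R :=
  fun p q => \sum_(km \in [set: int * int])
    (c km.1 km.2 * (-1) ^ km.2 * smul (mono R 0 km.2) (mono R km.1 0) p q).

Definition ddagger (R : realType) (c : series R) : series R :=
  fun k m => c m k.

Definition sharp (R : realType) (c : series R) : series R :=
  ddagger (dagger c).

Definition is_PsiD_automorphism (R : realType) (f : series R -> series R) : Prop :=
  (forall c, PsiD c -> PsiD (f c))
  /\ (forall c d, PsiD c -> PsiD d -> f (sadd c d) = sadd (f c) (f d))
  /\ (forall (z : CC R) c, PsiD c -> f (sscale z c) = sscale z (f c))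
  /\ (forall c d, PsiD c -> PsiD d -> f (smul c d) = smul (f c) (f d))
  /\ f (sone R) = sone R
  /\ (forall c d, PsiD c -> PsiD d -> f c = f d -> c = d)
  /\ (forall d, PsiD d -> exists2 c, PsiD c & f c = d).

(* The map # acts coefficientwise by
     (c^#) k m = sum_j c (m + j) (k + j) (-1)^(k + j) (k + j)_j (m + j)_j / j!,
   a finite sum for c in PsiD, so everything reduces to identities between finite
   sums of falling factorials.  Applying # twice, the inner sums collapse to the
   alternating binomial sum (1 - 1)^n, which gives (c^##) k m = (-1)^(k + m) c k m;
   hence #^4 = 1, so # is bijective.  For multiplicativity, the coefficient of
   x^k d^m in both (c d)^# and c^# d^# expands as
     sum_(a, b, n) c a b * d (m + n - a) (k + n - b) * (coefficient in k, m, a, b, n),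
   and the two coefficients agree because the Chu-Vandermonde identity (and its
   inverse form) turns both into the same single sum.  Finally # sends
   x |-> d |-> -x |-> -d, so its order is exactly 4. *)

From HB Require Import structures.
From mathcomp Require Import all_boot all_order all_algebra.
From mathcomp Require Import complex.
From mathcomp Require Import boolp classical_sets functions cardinality fsbigop reals.
From mathcomp Require Import zify ring.
Import Order.TTheory GRing.Theory Num.Theory.
Local Open Scope ring_scope.
Local Open Scope classical_set_scope.

Set Implicit Arguments. Unset Strict Implicit. Unset Printing Implicit Defensive.

Lemma mulf_neq0P (R : idomainType) (x y : R) : reflect (x != 0 /\ y != 0) (x * y != 0).
Proof. by rewrite mulf_eq0 negb_or; apply: andP. Qed.

Lemma finite_int_range (lo hi : int) : finite_set [set x : int | lo <= x <= hi].
Proof.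
apply: (sub_finite_set (B := (fun n : nat => lo + n%:Z) @` `I_(`|hi - lo|.+1))).
  by move=> x /= /andP[lox xhi]; exists `|x - lo|%N => /=; lia.
exact/finite_image/finite_II.
Qed.

Lemma finite_nat_le (S : set nat) N : (forall j, S j -> (j <= N)%N) -> finite_set S.
Proof. by move=> SN; apply: (sub_finite_set (B := `I_N.+1)) (finite_II _) => j /SN. Qed.

Lemma finite_fiber (I J : Type) (S : set (I * J)) (x : I) :
  finite_set S -> finite_set [set y | S (x, y)].
Proof. by move=> finS; apply: sub_finite_set (finite_image snd finS) => y Sxy; exists (x, y). Qed.

(* [\sum_(x \in [set: T]) F x] sums over the support of [F] and is [0] when that
   support is infinite, whence the finiteness hypotheses below. *)
Section FullSums.
Variable R : nmodType.

Lemma fsumT_sub (T : choiceType) (S : set T) (F : T -> R) :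
  (forall x, F x != 0 -> S x) -> \sum_(x \in [set: T]) F x = \sum_(x \in S) F x.
Proof.
move=> FS; apply/esym/fsbig_widen => // x [_ /= nSx]; apply/eqP.
by apply: contraT => /FS.
Qed.

Lemma fsumT_set1 (T : choiceType) (x0 : T) (F : T -> R) :
  (forall x, x != x0 -> F x = 0) -> \sum_(x \in [set: T]) F x = F x0.
Proof.
move=> F0; rewrite (@fsumT_sub _ [set x0]) ?fsbig_set1 // => x.
by case: (eqVneq x x0) => [-> //| /F0 ->]; rewrite eqxx.
Qed.

Lemma fsumT_ord (F : nat -> R) n : (forall j, (n <= j)%N -> F j = 0) ->
  \sum_(j \in [set: nat]) F j = \sum_(j < n) F j.
Proof.
move=> F0; rewrite fsbig_ord (@fsumT_sub _ `I_n) // => j.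
by rewrite /= ltnNge; apply: contraNN => /F0 ->.
Qed.

Lemma fsumTD (T : choiceType) (F G : T -> R) :
  finite_set [set x | F x != 0] -> finite_set [set x | G x != 0] ->
  \sum_(x \in [set: T]) (F x + G x) =
  \sum_(x \in [set: T]) F x + \sum_(x \in [set: T]) G x.
Proof.
move=> finF finG; set S := [set x | F x != 0] `|` [set x | G x != 0].
rewrite !(@fsumT_sub _ S) ?fsbig_split ?finite_setU // => [x|x|x] /=.
- by right.
- by left.
- by apply: contraNP => /not_orP[/negP/negPn/eqP -> /negP/negPn/eqP ->]; rewrite addr0.
Qed.

Lemma fsumT_pair (I J : choiceType) (F : I * J -> R) :
  finite_set [set x | F x != 0] ->
  \sum_(x \in [set: I * J]) F x = \sum_(i \in [set: I]) \sum_(j \in [set: J]) F (i, j).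
Proof.
set S := [set x | F x != 0] => finS.
have finP : finite_set (fst @` S) by apply: finite_image.
have finQ : finite_set (snd @` S) by apply: finite_image.
rewrite (@fsumT_sub _ (fst @` S `*` snd @` S)); last first.
  by move=> x Sx; split; exists x.
rewrite (eq_fsbigr (fun x => F (x.1, x.2))); last by case.
rewrite -(pair_fsbig _ (fun i j => F (i, j))) // (@fsumT_sub _ (fst @` S)).
  apply: eq_fsbigr => i _; apply/esym/fsumT_sub => j Sij; by exists (i, j).
move=> i; apply: contraNP => nSi; apply/eqP/fsbig1 => j _.
by apply: (contra_notP _ nSi) => /eqP Fij; exists (i, j).
Qed.

Lemma fsumT_reindex (I J : choiceType) (h : I -> J) (p : pred I) (F : J -> R) :
  set_bij [set z | p z] [set: J] h ->
  \sum_(y \in [set: J]) F y = \sum_(z \in [set: I]) (if p z then F (h z) else 0).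
Proof.
move=> hbij; rewrite (reindex_fsbig h _ _ _ hbij).
rewrite [RHS](@fsumT_sub _ [set z | p z]); last by move=> z /=; case: (p z); rewrite ?eqxx.
by apply: eq_fsbigr => z; rewrite in_setE /= => ->.
Qed.

Lemma fsumT_inj (I J : choiceType) (h : I -> J) (F : J -> R) :
  injective h -> (forall y, ~ range h y -> F y = 0) ->
  \sum_(y \in [set: J]) F y = \sum_(z \in [set: I]) F (h z).
Proof.
move=> hinj F0; rewrite (@fsumT_sub _ (range h)); last first.
  by move=> y; apply: contraNP => /F0 ->.
by apply: reindex_fsbig; split=> // x y _ _ /hinj.
Qed.

Lemma fsumT_antidiag (I : choiceType) (F : nat -> I -> nat -> R) :
  finite_set [set x : nat * (I * nat) | F x.1 x.2.1 x.2.2 != 0] ->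
  \sum_(i \in [set: nat]) \sum_(y \in [set: I * nat]) F i y.1 y.2 =
  \sum_(y \in [set: I * nat]) \sum_(i < y.2.+1) F i y.1 (y.2 - i)%N.
Proof.
set S := [set x | _] => finS.
pose h (z : I * nat * nat) := (z.2, (z.1.1, z.1.2 - z.2)%N).
have hbij : set_bij [set z | z.2 <= z.1.2]%N [set: nat * (I * nat)] h.
  split=> //; first move=> [[x n] i] [[x' n'] i'].
    by rewrite !in_setE /= => lein lein' [eqi -> eqn]; congr (_, _, _); lia.
  by move=> [i [x j]] _; exists ((x, i + j), i)%N; rewrite /h /= ?leq_addr ?addKn.
transitivity (\sum_(x \in [set: nat * (I * nat)]) F x.1 x.2.1 x.2.2).
  by rewrite fsumT_pair //; apply: eq_fsbigr => i _; rewrite fsumT_pair //; exact: finite_fiber.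
rewrite (fsumT_reindex _ hbij) fsumT_pair; last first.
  apply: (sub_finite_set (B := (fun x => ((x.2.1, x.1 + x.2.2), x.1)%N) @` S));
    last exact: finite_image.
  move=> [[x n] i] /=; case: ifP => [lein Fi|_]; last by rewrite eqxx.
  by exists (i, (x, n - i))%N; rewrite //= subnKC.
apply: eq_fsbigr => -[x n] _.
rewrite (@fsumT_ord _ n.+1) => [|j]; last by rewrite ltnNge => /negbTE ->.
by apply: eq_bigr => i _; rewrite -ltnS ltn_ord.
Qed.

End FullSums.

Lemma exchange_big_triangle (R : nmodType) (F : nat -> nat -> R) n :
  \sum_(i < n.+1) \sum_(j < (n - i).+1) F i j =
  \sum_(j < n.+1) \sum_(i < (n - j).+1) F i j.
Proof.
have triangle (G : nat -> nat -> R) : \sum_(i < n.+1) \sum_(j < (n - i).+1) G i j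
    = \sum_(i < n.+1) \sum_(j < n.+1) (if (i + j <= n)%N then G i j else 0).
  apply: eq_bigr => -[i /= lein] _.
  rewrite (big_ord_widen_cond n.+1 xpredT (G i)) ?ltnS ?leq_subr // big_mkcond.
  by apply: eq_bigr => j _; rewrite /= ltnS leq_subRL.
rewrite triangle exchange_big (triangle (fun j i => F i j)) /=.
by apply: eq_bigr => j _; apply: eq_bigr => i _; rewrite addnC.
Qed.

Lemma sum_binS (R : pzSemiRingType) (g : nat -> R) n :
  \sum_(j < n.+2) 'C(n.+1, j)%:R * g j =
  \sum_(j < n.+1) 'C(n, j)%:R * g j + \sum_(j < n.+1) 'C(n, j)%:R * g j.+1.
Proof.
rewrite big_ord_recl bin0 [X in _ = X + _]big_ord_recl bin0 -addrA; congr (_ + _).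
under eq_bigr => j _ do rewrite lift0 binS natrD mulrDl.
rewrite big_split /=; congr (_ + _).
by rewrite big_ord_recr /= bin_small // mul0r addr0.
Qed.

Lemma sum_alternating_bin (R : pzRingType) n :
  \sum_(j < n.+1) (-1) ^+ j * 'C(n, j)%:R = (n == 0)%:R :> R.
Proof.
have := exprBn_comm n (commr1 (1 : R)); rewrite subrr expr0n => ->.
by apply: eq_bigr => j _; rewrite !expr1n !mulr1 mulr_natr.
Qed.

Lemma natr_fact_neq0 (F : numDomainType) n : n`!%:R != 0 :> F.
Proof. by rewrite pnatr_eq0 -lt0n fact_gt0. Qed.

Lemma natr_bin_fact (F : numFieldType) n j : (j <= n)%N ->
  'C(n, j)%:R = n`!%:R / (j`!%:R * (n - j)`!%:R) :> F.
Proof. by move/bin_fact=> <-; rewrite !natrM mulfK // mulf_neq0 ?natr_fact_neq0. Qed.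

Section FallingFactorial.
Variable R : comRingType.

Definition ffactr (x : R) (j : nat) : R := \prod_(i < j) (x - i%:R).

Lemma ffactr0 x : ffactr x 0 = 1.
Proof. by rewrite /ffactr big_ord0. Qed.

Lemma ffactrS x j : ffactr x j.+1 = ffactr x j * (x - j%:R).
Proof. by rewrite /ffactr big_ord_recr. Qed.

Lemma ffactrSl x j : ffactr x j.+1 = x * ffactr (x - 1) j.
Proof.
rewrite /ffactr big_ord_recl subr0; congr (_ * _); apply: eq_bigr => i _.
by rewrite lift0 mulrS opprD addrA.
Qed.

Lemma ffactrD x p q : ffactr x (p + q) = ffactr x p * ffactr (x - p%:R) q.
Proof.
elim: q => [|q IH]; first by rewrite addn0 ffactr0 mulr1.
by rewrite addnS !ffactrS IH -mulrA natrD opprD addrA.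
Qed.

Lemma ffact0rS j : ffactr 0 j.+1 = 0.
Proof. by rewrite ffactrSl mul0r. Qed.

Lemma ffactr_vandermonde x y n :
  ffactr (x + y) n = \sum_(r < n.+1) 'C(n, r)%:R * (ffactr x r * ffactr y (n - r)).
Proof.
elim: n x y => [|n IH] x y; first by rewrite big_ord1 !ffactr0 bin0 !mul1r.
rewrite (sum_binS (fun r => ffactr x r * ffactr y (n.+1 - r))) ffactrSl.
have eR (j : 'I_n.+1) : 'C(n, j)%:R * (ffactr x j * ffactr y (n.+1 - j)) =
    y * ('C(n, j)%:R * (ffactr x j * ffactr (y - 1) (n - j))).
  by rewrite (@subSn j n (ltn_ord j)) ffactrSl; ring.
have eL (j : 'I_n.+1) : 'C(n, j)%:R * (ffactr x j.+1 * ffactr y (n.+1 - j.+1)) =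
    x * ('C(n, j)%:R * (ffactr (x - 1) j * ffactr y (n - j))).
  by rewrite subSS ffactrSl; ring.
rewrite (eq_bigr _ (fun j _ => eR j)) (eq_bigr _ (fun j _ => eL j)).
by rewrite -!mulr_sumr -!IH addrA [x - 1 + y]addrAC mulrDl [RHS]addrC.
Qed.

Lemma ffactrB_vandermonde x y n :
  ffactr (x - y) n =
  \sum_(j < n.+1) 'C(n, j)%:R * ((-1) ^+ j * ffactr y j * ffactr (x - j%:R) (n - j)).
Proof.
elim: n x y => [|n IH] x y; first by rewrite big_ord1 !ffactr0 bin0 expr0 !mul1r.
rewrite (sum_binS (fun j => (-1) ^+ j * ffactr y j * ffactr (x - j%:R) (n.+1 - j))).
have eR (j : 'I_n.+1) :
    'C(n, j)%:R * ((-1) ^+ j * ffactr y j * ffactr (x - j%:R) (n.+1 - j)) =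
    (x - n%:R) * ('C(n, j)%:R * ((-1) ^+ j * ffactr y j * ffactr (x - j%:R) (n - j))).
  by rewrite (@subSn j n (ltn_ord j)) ffactrS (@natrB _ n j (ltn_ord j)); ring.
have eL (j : 'I_n.+1) :
    'C(n, j)%:R * ((-1) ^+ j.+1 * ffactr y j.+1 * ffactr (x - j.+1%:R) (n.+1 - j.+1)) =
    - y * ('C(n, j)%:R * ((-1) ^+ j * ffactr (y - 1) j * ffactr (x - 1 - j%:R) (n - j))).
  by rewrite subSS ffactrSl exprS [j.+1%:R]mulrS opprD addrA; ring.
rewrite (eq_bigr _ (fun j _ => eR j)) (eq_bigr _ (fun j _ => eL j)).
rewrite -!mulr_sumr -!IH ffactrS opprB addrA subrK; ring.
Qed.

End FallingFactorial.

Lemma expN1zD (R : unitRingType) (m n : int) : (-1) ^ (m + n) = (-1) ^ m * (-1) ^ n :> R.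
Proof. exact: exprzDr (unitrN1 R) m n. Qed.

Lemma expN1zN (R : unitRingType) (n : int) : (-1) ^ (- n) = (-1) ^ n :> R.
Proof. by rewrite -exprz_inv invrN1. Qed.

Lemma expN1z_sqr (R : unitRingType) (n : int) : (-1) ^ n * (-1) ^ n = 1 :> R.
Proof. by rewrite -{2}(expN1zN _ n) -expN1zD subrr. Qed.

Section SharpCoefficients.
Variable R : realType.
Local Notation C := (CC R).

Lemma ffact_ffactr (a : int) j : ffact R a j = ffactr (a%:~R : C) j.
Proof. by []. Qed.

Lemma mono_val k0 m0 k m :
  mono R k0 m0 k m = if (k == k0) && (m == m0) then 1 else 0.
Proof. by rewrite /mono; case: ifP. Qed.

(* (d/dx)^b x^a = sum_j reorder_coef b a j x^(a - j) (d/dx)^(b - j) *)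
Definition reorder_coef (b a : int) (j : nat) : C :=
  ffact R b j * ffact R a j / j`!%:R.

Definition sharp_coef (k m : int) (j : nat) : C :=
  (-1) ^ (k + j%:Z) * reorder_coef (k + j%:Z) (m + j%:Z) j.

Lemma smulE (c d : series R) k l : smul c d k l =
  \sum_(t \in [set: int * int * nat])
    (c t.1.1 t.1.2 * d (k + t.2%:Z - t.1.1) (l + t.2%:Z - t.1.2) *
     reorder_coef t.1.2 (k + t.2%:Z - t.1.1) t.2).
Proof. by apply: eq_fsbigr => t _; rewrite /reorder_coef !mulrA. Qed.

Lemma smul_mono_dx (m k : int) (j : nat) :
  smul (mono R 0 (k + j%:Z)) (mono R (m + j%:Z) 0) m k =
  reorder_coef (k + j%:Z) (m + j%:Z) j.
Proof.
rewrite smulE (@fsumT_set1 _ _ (0, k + j%:Z, j)) /=.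
  by rewrite !mono_val !eqxx subr0 subrr !eqxx !mul1r.
move=> [[a b] i] neq /=; rewrite !mono_val.
have [/andP[/eqP a0 /eqP bkj]|] := boolP ((a == 0) && (b == k + j%:Z)); last by rewrite !mul0r.
have [/andP[/eqP _ /eqP kib]|] := boolP ((m + i%:Z - a == m + j%:Z) && (k + i%:Z - b == 0));
  last by rewrite mulr0 !mul0r.
move: neq; rewrite a0 bkj; have -> : i = j by lia.
by rewrite eqxx.
Qed.

Lemma smul_mono_dx0 (m k p q : int) :
  (forall j : nat, (m + j%:Z, k + j%:Z) != (p, q)) ->
  smul (mono R 0 q) (mono R p 0) m k = 0.
Proof.
move=> offdiag; rewrite smulE; apply: fsbig1 => -[[a b] i] _ /=; rewrite !mono_val.
have [/andP[/eqP a0 /eqP bq]|] := boolP ((a == 0) && (b == q)); last by rewrite !mul0r.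
have [/andP[/eqP mip /eqP kib]|] := boolP ((m + i%:Z - a == p) && (k + i%:Z - b == 0));
  last by rewrite mulr0 !mul0r.
move: (offdiag i); rewrite -mip a0 subr0; have -> : q = k + i%:Z by lia.
by rewrite eqxx.
Qed.

Lemma sharpE (c : series R) k m :
  sharp c k m = \sum_(j \in [set: nat]) c (m + j%:Z) (k + j%:Z) * sharp_coef k m j.
Proof.
rewrite /sharp /ddagger /dagger.
rewrite (@fsumT_inj _ _ _ (fun j : nat => (m + j%:Z, k + j%:Z))); last 2 first.
- by move=> i j [] ij _; lia.
- move=> [p q] offrange /=; rewrite smul_mono_dx0 ?mulr0 // => j.
  by apply/eqP => pq; apply: offrange; exists j.
by apply: eq_fsbigr => j _; rewrite smul_mono_dx /sharp_coef /= !mulrA.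
Qed.

Lemma sharp_coef_involution k m n :
  \sum_(j < n.+1) sharp_coef (m + j%:Z) (k + j%:Z) (n - j) * sharp_coef k m j =
  (n == 0)%:R * (-1) ^ (k + m).
Proof.
pose A : C := m%:~R + n%:R; pose B : C := k%:~R + n%:R.
have term j : (j <= n)%N ->
    sharp_coef (m + j%:Z) (k + j%:Z) (n - j) * sharp_coef k m j =
    ((-1) ^ (m + n%:Z) * (-1) ^ k * ffactr A n * ffactr B n / n`!%:R)
    * ((-1) ^+ j * 'C(n, j)%:R).
  move=> lejn.
  have shift (z : int) : z + j%:Z + (n - j)%N%:Z = z + n%:Z by lia.
  have ffactr_split (x : C) : ffactr (x + n%:R) (n - j) * ffactr (x + j%:R) j = ffactr (x + n%:R) n.
    have -> : ffactr (x + n%:R) n = ffactr (x + n%:R) (n - j + j) by rewrite subnK.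
    by rewrite ffactrD natrB //; congr (_ * ffactr _ _); ring.
  rewrite /sharp_coef /reorder_coef !shift !ffact_ffactr !intrD -!pmulrn (natr_bin_fact _ lejn).
  rewrite !expN1zD -!exprnP -(ffactr_split (m%:~R)) -(ffactr_split (k%:~R)).
  by field; rewrite ?mulf_neq0 ?natr_fact_neq0.
rewrite (eq_bigr _ (fun (j : 'I_n.+1) _ => term j (ltn_ord j))) -mulr_sumr sum_alternating_bin.
clear term; rewrite {}/A {}/B; case: n => [|n]; last by rewrite !mulr0 mul0r.
by rewrite !ffactr0 !addr0 !mulr1 mul1r invr1 mulr1 -expN1zD addrC.
Qed.

End SharpCoefficients.

Arguments reorder_coef {R}.
Arguments sharp_coef {R}.

Section SharpLinear.
Variable R : realType.
Local Notation C := (CC R).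
Implicit Types c d : series R.

Lemma PsiD_bounded c : PsiD c ->
  exists K M : int, forall a b, c a b != 0 -> a <= K /\ b <= M.
Proof. by move=> [K [M c0]]; exists K, M => a b; apply: contraNP => nab; apply/eqP/c0; lia. Qed.

Lemma PsiD_sharp c : PsiD c -> PsiD (sharp c).
Proof.
move=> /PsiD_bounded[K [M cKM]]; exists M, K => k m kmKM; rewrite sharpE.
by apply: fsbig1 => j _; apply: contraTeq isT => /mulf_neq0P[/cKM]; lia.
Qed.

Lemma finite_sharp_summand c k m : PsiD c ->
  finite_set [set j : nat | c (m + j%:Z) (k + j%:Z) * sharp_coef k m j != 0].
Proof.
move=> /PsiD_bounded[K [M cKM]]; apply: (@finite_nat_le _ `|K - m|) => j.
by move=> /mulf_neq0P[/cKM]; lia.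
Qed.

Lemma sharpD c d : PsiD c -> PsiD d -> sharp (sadd c d) = sadd (sharp c) (sharp d).
Proof.
move=> Pc Pd; apply/funext => k; apply/funext => m.
rewrite /sadd !sharpE -fsumTD; [|exact: finite_sharp_summand..].
by apply: eq_fsbigr => j _; rewrite mulrDl.
Qed.

Lemma sharpZ (z : C) c : sharp (sscale z c) = sscale z (sharp c).
Proof.
apply/funext => k; apply/funext => m.
rewrite /sscale !sharpE mulr_fsumr; apply: eq_fsbigr => j _; exact/esym/mulrA.
Qed.

Lemma sharp1 : sharp (sone R) = sone R.
Proof.
apply/funext => k; apply/funext => m; rewrite sharpE /sone mono_val.
rewrite (@fsumT_set1 _ _ 0%N) => [|j j_neq0].
  rewrite !addr0 mono_val /sharp_coef /reorder_coef !ffact_ffactr !ffactr0 addr0.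
  rewrite andbC; case: ifP => [/andP[/eqP-> _]|_]; rewrite ?mul0r //.
  by rewrite expr0z fact0 invr1 !mul1r.
rewrite mono_val; case: ifP => [/andP[/eqP mj0 /eqP kj0]|_]; last by rewrite mul0r.
case: j j_neq0 mj0 kj0 => // j _ mj kj.
by rewrite /sharp_coef /reorder_coef mj !ffact_ffactr mulr0z ffact0rS !(mulr0, mul0r).
Qed.

Lemma sharp_sharp c : PsiD c ->
  forall k m, sharp (sharp c) k m = (-1) ^ (k + m) * c k m.
Proof.
move=> Pc k m; have [K [M cKM]] := PsiD_bounded Pc.
(* The trivial index [u : unit] only serves to fit the shape of [fsumT_antidiag]. *)
pose G (j : nat) (u : unit) (i : nat) :=
  c (k + j%:Z + i%:Z) (m + j%:Z + i%:Z) * sharp_coef (m + j%:Z) (k + j%:Z) i * sharp_coef k m j.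
have -> : sharp (sharp c) k m = \sum_(j \in [set: nat]) \sum_(y \in [set: unit * nat]) G j y.1 y.2.
  rewrite sharpE; apply: eq_fsbigr => j _; rewrite sharpE mulr_fsuml.
  rewrite (@fsumT_inj _ _ _ (fun i => (tt, i))) => [|i i' []//|[[] i] /=]; last by case; exists i.
  by apply: eq_fsbigr.
rewrite fsumT_antidiag; last first.
  apply: (sub_finite_set (B := `I_`|K - k|.+1 `*` (setT `*` `I_`|K - k|.+1))).
    by move=> [j [[] i]] /mulf_neq0P[/mulf_neq0P[/cKM]]; rewrite /= ?in_setE; lia.
  by apply: finite_setX (finite_II _) (finite_setX finite_finset (finite_II _)).
rewrite (@fsumT_set1 _ _ (tt, 0%N)) => [|[[] n] n_neq0].
  rewrite /= big_ord1 /G /= !addr0 /sharp_coef /reorder_coef !ffact_ffactr !ffactr0 !addr0.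
  by rewrite subn0 fact0 invr1 expN1zD; ring.
have shift (j : 'I_n.+1) (z : int) : z + j%:Z + (n - j)%N%:Z = z + n%:Z.
  by have := ltn_ord j; lia.
under eq_bigr => j _ do rewrite /G /= !shift -mulrA.
have /negbTE n0F : n != 0%N by apply: contraNneq n_neq0 => ->.
by rewrite -mulr_sumr sharp_coef_involution /= n0F mul0r mulr0.
Qed.

End SharpLinear.

(* For A = a, B = b, A' = m + n - a and B' = k + n - b, the sums [sharpM_lsum] and
   [sharpM_rsum] are, up to the sign (-1)^(k + n), the coefficients of
   c a b * d (m + n - a) (k + n - b) at x^k d^m in (c d)^# and in c^# d^#. *)
Section SharpProductIdentity.
Variables (F : numFieldType) (A B A' B' : F).
Local Notation ff := (@ffactr F).
Local Notation "n `!" := (n`!%:R : F) : ring_scope.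

Definition sharpM_lsum n : F := \sum_(i < n.+1)
  (ff B (n - i) * ff A' (n - i) / (n - i)`! *
   ((-1) ^+ (n - i) * ff (B + B' - (n - i)%:R) i * ff (A + A' - (n - i)%:R) i / i`!)).

Definition sharpM_rsum n : F := \sum_(t < n.+1) \sum_(r < t.+1)
  (ff B r * ff A r / r`! * (ff B' (n - t) * ff A' (n - t) / (n - t)`!) *
   (ff (A - r%:R) (t - r) * ff (B' - (n - t)%:R) (t - r) / (t - r)`!)).

Definition sharpM_msum n : F := \sum_(r < n.+1)
  ff A r * ff A' (n - r) * ff (B + B' - (n - r)%:R) r * ff B' (n - r) / (r`! * (n - r)`!).

Lemma sharpM_rsumE n : sharpM_rsum n = sharpM_msum n.
Proof.
apply: eq_bigr => t _.
have term r : (r <= t)%N ->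
  ff B r * ff A r / r`! * (ff B' (n - t) * ff A' (n - t) / (n - t)`!) *
    (ff (A - r%:R) (t - r) * ff (B' - (n - t)%:R) (t - r) / (t - r)`!) =
  (ff A t * ff A' (n - t) * ff B' (n - t) / (t`! * (n - t)`!)) *
    ('C(t, r)%:R * (ff B r * ff (B' - (n - t)%:R) (t - r))).
  move=> lert; rewrite (natr_bin_fact _ lert).
  have -> : ff A t = ff A r * ff (A - r%:R) (t - r) by rewrite -ffactrD subnKC.
  by field; rewrite ?mulf_neq0 ?natr_fact_neq0.
rewrite (eq_bigr _ (fun (r : 'I_t.+1) _ => term r (ltn_ord r))).
rewrite -mulr_sumr -ffactr_vandermonde addrA.
by field; rewrite ?mulf_neq0 ?natr_fact_neq0.
Qed.

Lemma sharpM_lsumE n : sharpM_lsum n = sharpM_msum n.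
Proof.
pose W (j r : nat) := (-1) ^+ j * ff B j * ff (B + B' - j%:R) (n - j) / j`! *
   (ff A r * ff A' (n - r) / (r`! * (n - j - r)`!)).
have -> : sharpM_lsum n = \sum_(j < n.+1) \sum_(r < (n - j).+1) W j r.
  rewrite /sharpM_lsum (reindex_inj rev_ord_inj); apply: eq_bigr => -[j /= ltjn] _.
  have lejn : (j <= n)%N by [].
  rewrite subSS subKn // -[A + A' - _]addrA (ffactr_vandermonde A (A' - j%:R)).
  set P := \sum_(r < _) _.
  rewrite [LHS](_ : _ = ff B j * ff A' j / j`! * (-1) ^+ j *
    ff (B + B' - j%:R) (n - j) / (n - j)`! * P); last by ring.
  rewrite mulr_sumr.
  apply: eq_bigr => -[r /= ltr] _; have ler : (r <= n - j)%N by [].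
  rewrite (natr_bin_fact _ ler) /W.
  have -> : ff A' (n - r) = ff A' j * ff (A' - j%:R) (n - j - r).
    by rewrite -ffactrD; congr (ff _ _); lia.
  by field; rewrite ?mulf_neq0 ?natr_fact_neq0.
rewrite exchange_big_triangle; apply: eq_bigr => -[r /= ltr] _.
have term j : (j <= n - r)%N -> W j r =
    (ff A r * ff A' (n - r) * ff (B + B' - (n - r)%:R) r / (r`! * (n - r)`!)) *
    ('C(n - r, j)%:R * ((-1) ^+ j * ff B j * ff (B + B' - j%:R) (n - r - j))).
  move=> lej; rewrite /W.
  have -> : ff (B + B' - j%:R) (n - j) =
      ff (B + B' - j%:R) (n - r - j) * ff (B + B' - (n - r)%:R) r.
    rewrite [in LHS](_ : (n - j = (n - r - j) + r)%N); last by lia.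
    by rewrite ffactrD; congr (_ * ff _ _); rewrite !natrB //; ring.
  rewrite (natr_bin_fact _ lej) (_ : (n - j - r = n - r - j)%N); last by lia.
  by field; rewrite ?mulf_neq0 ?natr_fact_neq0.
rewrite (eq_bigr _ (fun (j : 'I_(n - r).+1) _ => term j (ltn_ord j))).
rewrite -mulr_sumr -ffactrB_vandermonde [B + B' - B]addrAC subrr add0r.
by field; rewrite ?mulf_neq0 ?natr_fact_neq0.
Qed.

End SharpProductIdentity.

Section SharpMultiplicative.
Variable R : realType.
Local Notation C := (CC R).

Definition sharpM_coefL (k m a b : int) (n : nat) : C :=
  \sum_(i < n.+1) reorder_coef b (m + n%:Z - a) (n - i) * sharp_coef k m i.

Definition sharpM_coefR (k m a b : int) (n : nat) : C :=
  \sum_(t < n.+1) \sum_(r < t.+1)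
    (sharp_coef (b - r%:Z) (a - r%:Z) r * sharp_coef (k + t%:Z - b) (m + t%:Z - a) (n - t) *
     reorder_coef (a - r%:Z) (k + t%:Z - b) (t - r)).

Lemma sharpM_coefLR k m a b n : sharpM_coefL k m a b n = sharpM_coefR k m a b n.
Proof.
set A : C := a%:~R; set B : C := b%:~R.
set A' : C := (m + n%:Z - a)%:~R; set B' : C := (k + n%:Z - b)%:~R.
have AA' : A + A' = (m + n%:Z)%:~R by rewrite -intrD addrC subrK.
have BB' : B + B' = (k + n%:Z)%:~R by rewrite -intrD addrC subrK.
suff [-> ->] : sharpM_coefL k m a b n = (-1) ^ (k + n%:Z) * sharpM_lsum A B A' B' n /\
               sharpM_coefR k m a b n = (-1) ^ (k + n%:Z) * sharpM_rsum A B A' B' n.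
  by rewrite sharpM_lsumE sharpM_rsumE.
have intr_shift (z : int) (p q : nat) : (p <= q)%N ->
    (z + p%:Z)%:~R = (z + q%:Z)%:~R - (q - p)%:R :> C.
  by move=> lepq; rewrite !intrD -!pmulrn natrB //; ring.
split; rewrite mulr_sumr; apply: eq_bigr => -[t /= ltn] _; have letn : (t <= n)%N by [].
  have sign : (-1) ^ (k + t%:Z) = (-1) ^ (k + n%:Z) * (-1) ^+ (n - t) :> C.
    by rewrite exprnP -(expN1zN _ (n - t)%N) -expN1zD; congr (_ ^ _); lia.
  rewrite /sharp_coef /reorder_coef !ffact_ffactr sign.
  rewrite (intr_shift k _ _ letn) (intr_shift m _ _ letn).
  by rewrite -AA' -BB'; ring.
rewrite mulr_sumr; apply: eq_bigr => r _.
have shift (z y : int) : z + t%:Z - y + (n - t)%N%:Z = z + n%:Z - y by lia.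
have e1 : (a - r%:Z)%:~R = A - r%:R :> C by rewrite intrB -pmulrn.
have e2 : (k + t%:Z - b)%:~R = B' - (n - t)%:R :> C.
  by rewrite -addrAC (intr_shift _ _ _ letn) addrAC.
have sign : (-1) ^ (k + n%:Z) = (-1) ^ b * (-1) ^ (k + n%:Z - b) :> C.
  by rewrite -expN1zD [b + _]addrC subrK.
rewrite /sharp_coef /reorder_coef !subrK !shift !ffact_ffactr e1 e2 sign; ring.
Qed.

Section Expansions.
Variables (c d : series R) (K1 M1 K2 M2 : int).
Hypothesis c_bnd : forall a b, c a b != 0 -> a <= K1 /\ b <= M1.
Hypothesis d_bnd : forall a b, d a b != 0 -> a <= K2 /\ b <= M2.
Variables k m : int.

Let N := (absz (K1 + K2 - m)%R + absz (M1 + M2 - k)%R).+1.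
Let Ia := [set a : int | m - K2 <= a <= K1].
Let Ib := [set b : int | k - M2 <= b <= M1].
Let finIa : finite_set Ia. Proof. exact: finite_int_range. Qed.
Let finIb : finite_set Ib. Proof. exact: finite_int_range. Qed.

Let sharp_smul_term (i : nat) (ab : int * int) (j : nat) : C :=
  c ab.1 ab.2 * d (m + i%:Z + j%:Z - ab.1) (k + i%:Z + j%:Z - ab.2) *
  reorder_coef ab.2 (m + i%:Z + j%:Z - ab.1) j * sharp_coef k m i.

Lemma sharp_smulE : sharp (smul c d) k m =
  \sum_(w \in [set: int * int * nat])
    c w.1.1 w.1.2 * d (m + w.2%:Z - w.1.1) (k + w.2%:Z - w.1.2) * sharpM_coefL k m w.1.1 w.1.2 w.2.
Proof.
have -> : sharp (smul c d) k m =
    \sum_(i \in [set: nat]) \sum_(y \in [set: int * int * nat]) sharp_smul_term i y.1 y.2.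
  rewrite sharpE; apply: eq_fsbigr => i _; rewrite smulE mulr_fsuml.
  by apply: eq_fsbigr => -[[a b] j].
rewrite fsumT_antidiag; last first.
  apply: (sub_finite_set (B := `I_N `*` ((Ia `*` Ib) `*` `I_N))); last first.
    by apply: finite_setX (finite_II _) (finite_setX (finite_setX _ _) (finite_II _)).
  move=> [i [[a b] j]] /= /mulf_neq0P[/mulf_neq0P[/mulf_neq0P[]]] //.
  move=> /c_bnd /= [? ?] /d_bnd /= [? ?] _ _.
  rewrite /Ia /Ib /N /=; lia.
apply: eq_fsbigr => -[[a b] n] _; rewrite /sharpM_coefL mulr_sumr.
apply: eq_bigr => -[i /= lti] _.
have shift (z : int) : z + i%:Z + (n - i)%N%:Z = z + n%:Z by lia.
by rewrite /sharp_smul_term /= !shift !mulrA.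
Qed.

Let smul_sharp_term (x : int * int * nat * (nat * nat)) : C :=
  let: (u, v, j, (r, s)) := x in
  c (v + r%:Z) (u + r%:Z) * sharp_coef u v r *
  (d (m + j%:Z - v + s%:Z) (k + j%:Z - u + s%:Z) * sharp_coef (k + j%:Z - u) (m + j%:Z - v) s) *
  reorder_coef v (k + j%:Z - u) j.

Let finite_smul_sharp_term : finite_set [set x | smul_sharp_term x != 0].
Proof.
apply: (sub_finite_set (B := ((Ib `*` Ia) `*` `I_N) `*` (`I_N `*` `I_N))); last first.
  by apply: finite_setX (finite_setX (finite_setX _ _) (finite_II _))
                        (finite_setX (finite_II _) (finite_II _)).
move=> [[[u v] j] [r s]] /= /mulf_neq0P[/mulf_neq0P[/mulf_neq0P[/c_bnd[? ?] _]]].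
move=> /mulf_neq0P[/d_bnd[? ?] _] _; rewrite /Ia /Ib /N /=; lia.
Qed.

Lemma smul_sharp_flat :
  smul (sharp c) (sharp d) k m =
  \sum_(x \in [set: int * int * nat * (nat * nat)]) smul_sharp_term x.
Proof.
rewrite smulE [RHS]fsumT_pair //; apply: eq_fsbigr => -[[u v] j] _ /=.
rewrite fsumT_pair; last exact: (finite_fiber (u, v, j) finite_smul_sharp_term).
rewrite !sharpE mulr_fsuml !mulr_fsuml; apply: eq_fsbigr => r _.
by rewrite mulr_fsumr mulr_fsuml; apply: eq_fsbigr => s _; rewrite mulrA.
Qed.

Lemma smul_sharpE : smul (sharp c) (sharp d) k m =
  \sum_(w \in [set: int * int * nat])
    c w.1.1 w.1.2 * d (m + w.2%:Z - w.1.1) (k + w.2%:Z - w.1.2) * sharpM_coefR k m w.1.1 w.1.2 w.2.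
Proof.
pose h (z : int * int * nat * (nat * nat)) : int * int * nat * (nat * nat) :=
  let: (a, b, n, (t, r)) := z in (b - r%:Z, a - r%:Z, (t - r)%N, (r, (n - t)%N)).
pose g (x : int * int * nat * (nat * nat)) : int * int * nat * (nat * nat) :=
  let: (u, v, j, (r, s)) := x in (v + r%:Z, u + r%:Z, (r + j + s)%N, ((r + j)%N, r)).
pose p (z : int * int * nat * (nat * nat)) := (z.2.2 <= z.2.1 <= z.1.2)%N.
have hbij : set_bij [set z | p z] [set: _] h.
  split=> //.
    move=> [[[a b] n] [t r]] [[[a' b'] n'] [t' r']]; rewrite !in_setE /p /=.
    by move=> /andP[? ?] /andP[? ?] [? ? ? ? ?]; congr (_, _, _, (_, _)); lia.
  move=> [[[u v] j] [r s]] _; exists (g (u, v, j, (r, s))); rewrite /p /=; first lia.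
  by congr (_, _, _, (_, _)); lia.
have fin : finite_set [set z | (if p z then smul_sharp_term (h z) else 0) != 0].
  apply: (sub_finite_set (B := g @` [set x | smul_sharp_term x != 0])); last exact: finite_image.
  move=> [[[a b] n] [t r]] /=; rewrite /p /=.
  case: ifP => [/andP[lert letn] nz|_]; last by rewrite eqxx.
  by exists (h (a, b, n, (t, r))) => //=; congr (_, _, _, (_, _)); lia.
rewrite smul_sharp_flat (fsumT_reindex _ hbij) fsumT_pair //; apply: eq_fsbigr => -[[a b] n] _.
rewrite fsumT_pair; last exact: (finite_fiber (a, b, n) fin).
rewrite (@fsumT_ord _ _ n.+1) => [|t ltnt]; last first.
  by apply: fsbig1 => r _; rewrite /p /= (leqNgt t n) ltnt andbF.
rewrite /sharpM_coefR !mulr_sumr; apply: eq_bigr => -[t /= ltn] _; have letn : (t <= n)%N by [].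
rewrite (@fsumT_ord _ _ t.+1) => [|r ltrt]; last by rewrite /p /= (leqNgt r t) ltrt.
rewrite !mulr_sumr; apply: eq_bigr => -[r /= ltr] _; have lert : (r <= t)%N by [].
rewrite /p /= lert letn /=.
have e1 : m + (t - r)%N%:Z - (a - r%:Z) + (n - t)%N%:Z = m + n%:Z - a by lia.
have e2 : k + (t - r)%N%:Z - (b - r%:Z) + (n - t)%N%:Z = k + n%:Z - b by lia.
have e3 : k + (t - r)%N%:Z - (b - r%:Z) = k + t%:Z - b by lia.
have e4 : m + (t - r)%N%:Z - (a - r%:Z) = m + t%:Z - a by lia.
by rewrite !subrK e1 e2 e3 e4; ring.
Qed.

End Expansions.

Lemma sharpM (c d : series R) : PsiD c -> PsiD d ->
  sharp (smul c d) = smul (sharp c) (sharp d).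
Proof.
move=> /PsiD_bounded[K1 [M1 c_bnd]] /PsiD_bounded[K2 [M2 d_bnd]].
apply/funext => k; apply/funext => m.
rewrite (sharp_smulE c_bnd d_bnd) (smul_sharpE c_bnd d_bnd).
by apply: eq_fsbigr => w _; rewrite sharpM_coefLR.
Qed.

End SharpMultiplicative.

Section SharpAutomorphism.
Variable R : realType.
Implicit Types c d : series R.

Lemma PsiD_mono k0 m0 : PsiD (mono R k0 m0).
Proof.
exists k0, m0 => k m km; rewrite mono_val.
by case: ifP => // /andP[/eqP k0k /eqP m0m]; lia.
Qed.

Lemma iter_sharp4 c : PsiD c -> iter 4 (@sharp R) c = c.
Proof.
move=> Pc; have P2c : PsiD (sharp (sharp c)) by do 2 apply: PsiD_sharp.
apply/funext => k; apply/funext => m.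
by rewrite /= !sharp_sharp // mulrA expN1z_sqr mul1r.
Qed.

Lemma sharp_automorphism : is_PsiD_automorphism (@sharp R).
Proof.
split; first exact: PsiD_sharp.
split; first exact: sharpD.
split; first by move=> z c _; apply: sharpZ.
split; first exact: sharpM.
split; first exact: sharp1.
split.
  move=> c d Pc Pd cd; rewrite -(iter_sharp4 Pc) -(iter_sharp4 Pd).
  by rewrite !iterSr cd.
move=> d Pd; exists (iter 3 (@sharp R) d); first by do 3 apply: PsiD_sharp.
by rewrite -[RHS](iter_sharp4 Pd).
Qed.

Lemma sharp_eq0_10 c : (forall j : nat, c j%:Z (1 + j%:Z) = 0) -> sharp c 1 0 = 0.
Proof. by move=> c0; rewrite sharpE; apply: fsbig1 => j _; rewrite add0r c0 mul0r. Qed.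

Lemma iter_sharp_x_neq n : (0 < n < 4)%N -> iter n (@sharp R) (mono R 1 0) <> mono R 1 0.
Proof.
have Px := PsiD_mono 1 0.
have x0 (j : nat) : mono R 1 0 j%:Z (1 + j%:Z) = 0.
  by rewrite mono_val; case: ifP => // /andP[/eqP j1 /eqP j0]; lia.
have x10 : mono R 1 0 1 0 = 1 by rewrite mono_val !eqxx.
have sharp_x : sharp (mono R 1 0) 1 0 = 0 by exact: sharp_eq0_10.
have sharp2_x : sharp (sharp (mono R 1 0)) 1 0 = -1.
  by rewrite sharp_sharp // x10 mulr1 addr0 expr1z.
have sharp3_x : sharp (sharp (sharp (mono R 1 0))) 1 0 = 0.
  by apply: sharp_eq0_10 => j; rewrite sharp_sharp // x0 mulr0.
move=> /andP[n_gt0 n_lt4] /(congr1 (fun c => c 1 0)); rewrite x10.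
case: n n_gt0 n_lt4 => [|[|[|[|n]]]] // _ _ /=.
- by rewrite sharp_x => /esym/eqP; rewrite oner_eq0.
- by rewrite sharp2_x => /eqP; rewrite eq_sym -addr_eq0 -mulr2n pnatr_eq0.
- by rewrite sharp3_x => /esym/eqP; rewrite oner_eq0.
Qed.

End SharpAutomorphism.

Theorem lemma2p4 (R : realType) :
  is_PsiD_automorphism (@sharp R)
  /\ (forall c : series R, PsiD c -> iter 4 (@sharp R) c = c)
  /\ (forall n : nat, (0 < n < 4)%N ->
        exists2 c : series R, PsiD c & iter n (@sharp R) c <> c).
Proof.
split; first exact: sharp_automorphism.
split; first exact: iter_sharp4.
by move=> n n_range; exists (mono R 1 0); [exact: PsiD_mono | exact: iter_sharp_x_neq].
Qed.
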